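(* Let $k\ge 1$, let $a_0,\dots,a_{k-1}\in\mathbb{Q}$ with $a_0\neq 0$, and let $u:\mathbb{N}_0\to\mathbb{Q}$ be the linear recurrence sequence with given initial values $u(0),\dots,u(k-1)\in\mathbb{Q}$ and $u(n+k)=\sum_{i=0}^{k-1}a_i\,u(n+i)$ for all $n\ge 0$. Define sequences $x_0,\dots,x_{k-1}:\mathbb{N}_0\to\mathbb{Q}$ by the initial values $$x_0(0)=u(0),\qquad x_i(0)=u(i)\cdot\prod_{\ell=0}^{i-1}x_\ell(0)\quad(1\le i<k),$$ and the recurrences, for all $n\ge 0$, $$x_i(n+1)=x_{i+1}(n)\quad(0\le i<k-1),\qquad x_{k-1}(n+1)=\sum_{i=0}^{k-1}a_i\,x_i(n)\prod_{\ell=i}^{k-1}x_\ell(n).$$ Define sequences $s_0,\dots,s_{k-1}:\mathbb{N}_0\to\mathbb{Q}$ by $s_0(0)=1$, $s_i(0)=\prod_{\ell=0}^{i-1}x_\ell(0)$ for $1\le i<k$, and for all $n\ge0$: $s_i(n+1)=s_{i+1}(n)$ for $0\le i<k-1$ and $s_{k-1}(n+1)=s_{k-1}(n)\cdot x_{k-1}(n)$. Then for all $n\ge 0$ and all $0\le i<k$, $$x_i(n)=s_i(n)\cdot u(n+i)\qquad\text{and}\qquad s_i(n)=\prod_{\ell=0}^{n-1}x_0(\ell)\cdot\prod_{\ell=0}^{i-1}x_\ell(n),$$ where empty products equal $1$. *)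

(* Sequences are functions nat -> rat; the family
   x_0..x_{k-1} is encoded as x : nat -> nat -> rat with x i n = x_i(n). *)
From mathcomp Require Import all_boot all_order all_algebra.

From mathcomp Require Import all_boot all_order all_algebra.
From mathcomp Require Import ring.
Import GRing.Theory.
Local Open Scope ring_scope.

(* Writing P(n) for the product of
   x_0(0), ..., x_0(n-1), the shift x_l(n+1) = x_(l+1)(n) gives
   P(n+1) * prod_(l<i) x_l(n+1) = P(n) * prod_(l<=i) x_l(n), which propagates
   the closed form of s from n to n+1.  For the top index the recurrence of x
   becomes, after substituting x_i(n) = s_i(n) u(n+i) and the closed form of
   s_i(n), the common factor P(n) * prod_(l<k) x_l(n) = s_(k-1)(n+1) times the
   recurrence of u at n+1. *)

Lemma prod_ord_split {R : comPzRingType} (F : nat -> R) {n j} : (j <= n)%N ->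
  \prod_(l < n) F l = \prod_(l < j) F l * \prod_(j <= l < n) F l.
Proof.
by move=> le_jn; rewrite -!(big_mkord xpredT) (@big_cat_nat _ _ _ j).
Qed.

Section ShiftedProducts.

Variables (R : comPzRingType) (K : nat) (a u : nat -> R) (x s : nat -> nat -> R).

Hypothesis u_rec : forall n, u (n + K.+1)%N = \sum_(i < K.+1) a i * u (n + i)%N.
Hypothesis x_init0 : x 0%N 0%N = u 0%N.
Hypothesis x_init :
  forall i, (1 <= i < K.+1)%N -> x i 0%N = u i * \prod_(l < i) x l 0%N.
Hypothesis x_shift : forall n i, (i < K)%N -> x i n.+1 = x i.+1 n.
Hypothesis x_top : forall n,
  x K n.+1 = \sum_(i < K.+1) a i * x i n * \prod_(i <= l < K.+1) x l n.
Hypothesis s_init0 : s 0%N 0%N = 1.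
Hypothesis s_init : forall i, (1 <= i < K.+1)%N -> s i 0%N = \prod_(l < i) x l 0%N.
Hypothesis s_shift : forall n i, (i < K)%N -> s i n.+1 = s i.+1 n.
Hypothesis s_top : forall n, s K n.+1 = s K n * x K n.

Definition s_closed_form n :=
  forall i, (i <= K)%N -> s i n = (\prod_(l < n) x 0%N l) * \prod_(l < i) x l n.

Definition x_eq_s_u n := forall i, (i <= K)%N -> x i n = s i n * u (n + i)%N.

Lemma prod_x_succ n i : (i <= K)%N ->
  (\prod_(l < n.+1) x 0%N l) * \prod_(l < i) x l n.+1 =
  (\prod_(l < n) x 0%N l) * \prod_(l < i.+1) x l n.
Proof.
move=> le_iK; rewrite big_ord_recr big_ord_recl /= -mulrA; congr (_ * (_ * _)).
by apply: eq_bigr => l _; apply: x_shift; apply: leq_trans (ltn_ord l) le_iK.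
Qed.

Lemma s_closed_form0 : s_closed_form 0.
Proof. by case=> [|i] le_iK; rewrite ?s_init0 ?s_init // !big_ord0 mul1r. Qed.

Lemma x_eq_s_u0 : x_eq_s_u 0.
Proof.
by case=> [|i] le_iK; rewrite ?x_init0 ?s_init0 ?mul1r ?x_init ?s_init // mulrC.
Qed.

Lemma s_closed_form_succ n : s_closed_form n -> s_closed_form n.+1.
Proof.
move=> s_n i le_iK; rewrite prod_x_succ //.
have [lt_iK | le_Ki] := ltnP i K; first by rewrite s_shift // s_n.
have -> : i = K by apply/eqP; rewrite eqn_leq le_iK.
by rewrite s_top s_n // big_ord_recr /= mulrA.
Qed.

Lemma x_top_eq_s_u n : s_closed_form n -> x_eq_s_u n ->
  x K n.+1 = s K n.+1 * u (n.+1 + K)%N.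
Proof.
move=> s_n x_n; rewrite x_top s_closed_form_succ // prod_x_succ //.
rewrite addSnnS u_rec mulr_sumr; apply: eq_bigr => j _.
have le_jK : (j <= K)%N := ltn_ord j.
rewrite x_n // s_n // (prod_ord_split (fun l => x l n) (ltnW (ltn_ord j))).
ring.
Qed.

Lemma x_eq_s_u_succ n : s_closed_form n -> x_eq_s_u n -> x_eq_s_u n.+1.
Proof.
move=> s_n x_n i le_iK; have [lt_iK | le_Ki] := ltnP i K.
  by rewrite x_shift // s_shift // x_n // addnS.
have -> : i = K by apply/eqP; rewrite eqn_leq le_iK.
exact: x_top_eq_s_u.
Qed.

Lemma shifted_products n : s_closed_form n /\ x_eq_s_u n.
Proof.
elim: n => [|n [s_n x_n]]; first by split; [exact: s_closed_form0 | exact: x_eq_s_u0].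
by split; [exact: s_closed_form_succ | exact: x_eq_s_u_succ].
Qed.

End ShiftedProducts.

Theorem lemma3p2 (k : nat) (a u : nat -> rat) (x s : nat -> nat -> rat) :
  (1 <= k)%N -> a 0%N != 0 ->
  (forall n, u (n + k)%N = \sum_(i < k) a i * u (n + i)%N) ->
  x 0%N 0%N = u 0%N ->
  (forall i, (1 <= i < k)%N -> x i 0%N = u i * \prod_(l < i) x l 0%N) ->
  (forall n i, (i < k.-1)%N -> x i n.+1 = x i.+1 n) ->
  (forall n, x k.-1 n.+1 = \sum_(i < k) a i * x i n * \prod_(i <= l < k) x l n) ->
  s 0%N 0%N = 1 ->
  (forall i, (1 <= i < k)%N -> s i 0%N = \prod_(l < i) x l 0%N) ->
  (forall n i, (i < k.-1)%N -> s i n.+1 = s i.+1 n) ->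
  (forall n, s k.-1 n.+1 = s k.-1 n * x k.-1 n) ->
  forall n i, (i < k)%N ->
    x i n = s i n * u (n + i)%N /\
    s i n = (\prod_(l < n) x 0%N l) * \prod_(l < i) x l n.
Proof.
case: k => [//|K] _ _ u_rec x_init0 x_init x_shift x_top s_init0 s_init s_shift s_top.
move=> n i lt_iK.
have [s_n x_n] := @shifted_products _ K a u x s u_rec x_init0 x_init x_shift x_top
  s_init0 s_init s_shift s_top n.
by split; [exact: x_n | exact: s_n].
Qed.
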